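(* Let $\Omega\subset\mathbb{R}^3$ be a domain and let $\varphi:\Omega\to\mathbb{C}$ be a twice differentiable function with $\varphi\neq 0$ in $\Omega$. Put $\vec\alpha=\frac{\operatorname{grad}\varphi}{\varphi}$ and $v=\frac{\Delta\varphi}{\varphi}$, so that $\varphi$ solves the Schrödinger equation $-\Delta\varphi+v\varphi=0$. Let $\psi:\Omega\to\mathbb{C}$ be a twice differentiable function which is another solution of $-\Delta\psi+v\psi=0$ in $\Omega$. Then the function $$\vec f=(D-\vec\alpha)\psi=D\psi-\vec\alpha\,\psi$$ satisfies $(D+M^{\vec\alpha})\vec f=0$, i.e. $D\vec f+\vec f\cdot\vec\alpha=0$, in $\Omega$.
   Context: $\mathbb{H}(\mathbb{C})$ denotes the algebra of complex quaternions (biquaternions) $q=\sum_{k=0}^3 q_k i_k$, $q_k\in\mathbb{C}$, where $i_0=1$ and $i_1,i_2,i_3$ are the standard quaternionic imaginary units; vector parts $\vec q=\sum_{k=1}^3q_ki_k$ are identified with vectors of $\mathbb{C}^3$, and the product is $p\cdot q=p_0q_0-\langle\vec p,\vec q\rangle+[\vec p\times\vec q]+p_0\vec q+q_0\vec p$. For a biquaternion $p$, $M^p$ denotes right multiplication: $M^pq=q\cdot p$. The Moisil–Theodoresco operator is $Df=\sum_{k=1}^3 i_k\partial_k f$; for a scalar function $\psi$, $D\psi=\operatorname{grad}\psi$, and for $f=f_0+\vec f$, $Df=-\operatorname{div}\vec f+\operatorname{grad}f_0+\operatorname{rot}\vec f$. *)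

From Stdlib Require Import Reals.
From Coquelicot Require Import Coquelicot.

Definition R3 := (R * R * R)%type.

Definition shift (k : nat) (x : R3) (t : R) : R3 :=
  match x with (x1, x2, x3) =>
    match k with
    | 1%nat => (x1 + t, x2, x3)%R
    | 2%nat => (x1, x2 + t, x3)%R
    | _ => (x1, x2, x3 + t)%R
    end
  end.

Definition pd (k : nat) (f : R3 -> C) (x : R3) : C :=
  (Derive (fun t => Re (f (shift k x t))) 0, Derive (fun t => Im (f (shift k x t))) 0).

Definition connected3 (S : R3 -> Prop) : Prop :=
  forall U V : R3 -> Prop, open U -> open V ->
    (forall x, S x -> U x \/ V x) ->
    (exists x, S x /\ U x) -> (exists x, S x /\ V x) ->
    exists x, S x /\ U x /\ V x.
Definition domain3 (S : R3 -> Prop) : Prop := open S /\ connected3 S.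

Definition twice_diff_on (Om : R3 -> Prop) (f : R3 -> C) : Prop :=
  forall x, Om x ->
    ex_filterdiff f (locally x) /\
    forall k, (1 <= k <= 3)%nat -> ex_filterdiff (pd k f) (locally x).

Definition laplacian (f : R3 -> C) (x : R3) : C :=
  Cplus (Cplus (pd 1 (pd 1 f) x) (pd 2 (pd 2 f) x)) (pd 3 (pd 3 f) x).

(* Complex vectors C^3 and biquaternions H(C) = C x C^3 (scalar part, vector part). *)
Definition CV := (C * C * C)%type.
Definition BQ := (C * CV)%type.

Definition C0 : C := RtoC 0.
Definition vzero : CV := (C0, C0, C0).
Definition vadd (p q : CV) : CV :=
  match p, q with (p1, p2, p3), (q1, q2, q3) =>
    (Cplus p1 q1, Cplus p2 q2, Cplus p3 q3) end.
Definition vscal (a : C) (p : CV) : CV :=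
  match p with (p1, p2, p3) => (Cmult a p1, Cmult a p2, Cmult a p3) end.
Definition vdot (p q : CV) : C :=
  match p, q with (p1, p2, p3), (q1, q2, q3) =>
    Cplus (Cplus (Cmult p1 q1) (Cmult p2 q2)) (Cmult p3 q3) end.
Definition vcross (p q : CV) : CV :=
  match p, q with (p1, p2, p3), (q1, q2, q3) =>
    (Cminus (Cmult p2 q3) (Cmult p3 q2),
     Cminus (Cmult p3 q1) (Cmult p1 q3),
     Cminus (Cmult p1 q2) (Cmult p2 q1)) end.

Definition qadd (p q : BQ) : BQ := (Cplus (fst p) (fst q), vadd (snd p) (snd q)).
Definition qopp (p : BQ) : BQ := (Copp (fst p), vscal (RtoC (-1)) (snd p)).
Definition qsub (p q : BQ) : BQ := qadd p (qopp q).
Definition qzero : BQ := (C0, vzero).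

Definition qmul (p q : BQ) : BQ :=
  (Cminus (Cmult (fst p) (fst q)) (vdot (snd p) (snd q)),
   vadd (vadd (vcross (snd p) (snd q)) (vscal (fst p) (snd q))) (vscal (fst q) (snd p))).

Definition qscal (a : C) : BQ := (a, vzero).
Definition qvec (v : CV) : BQ := (C0, v).

Definition Mr (p : BQ) (q : BQ) : BQ := qmul q p.

Definition C1 : C := RtoC 1.
Definition i1 : BQ := qvec (C1, C0, C0).
Definition i2 : BQ := qvec (C0, C1, C0).
Definition i3 : BQ := qvec (C0, C0, C1).

Definition pdq (k : nat) (f : R3 -> BQ) (x : R3) : BQ :=
  (pd k (fun y => fst (f y)) x,
   (pd k (fun y => fst (fst (snd (f y)))) x,
    pd k (fun y => snd (fst (snd (f y)))) x,
    pd k (fun y => snd (snd (f y))) x)).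

Definition Dop (f : R3 -> BQ) (x : R3) : BQ :=
  qadd (qadd (qmul i1 (pdq 1 f x)) (qmul i2 (pdq 2 f x))) (qmul i3 (pdq 3 f x)).

Definition grad (f : R3 -> C) (x : R3) : CV := (pd 1 f x, pd 2 f x, pd 3 f x).

(* With g_j = d_j psi - alpha_j psi, the function f is the pure vector (0, g), so
   (D + M^alpha) f = (- div g - <g, alpha>, rot g + g x alpha).  Expanding alpha_j = d_j phi / phi,
   the scalar part is -Lap psi + (Lap phi / phi) psi, which vanishes by hypothesis, and the vector
   part is a combination of the commutators d_j d_k - d_k d_j applied to psi and phi.  These vanish
   by Young's version of Schwarz's theorem, which needs the first partial derivatives to be
   differentiable but not continuous: both mean value theorems applied to the second difference
   w(h,h) - w(h,0) - w(0,h) + w(0,0) compare the two mixed derivatives up to o(h). *)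

From Pilot Require Import Defs.
From Stdlib Require Import Reals Lra Lia FunctionalExtensionality.
From Coquelicot Require Import Coquelicot.

Lemma mvt_interval (f df : R -> R) (h : R) : 0 < h ->
  (forall s, 0 <= s <= h -> is_derive f s (df s)) ->
  exists c, 0 <= c <= h /\ f h - f 0 = df c * h.
Proof.
  intros Hh Hd.
  destruct (MVT_gen f 0 h df) as [c [Hc E]];
    rewrite ?Rmin_left, ?Rmax_right in * by lra.
  - intros s Hs. apply Hd; lra.
  - intros s Hs. apply continuity_pt_filterlim, (ex_derive_continuous f).
    exists (df s). apply Hd; lra.
  - exists c. split; [lra|]. rewrite E. ring.
Qed.

Lemma second_difference_mvt (w a b : R -> R -> R) (h : R) : 0 < h ->
  (forall s t, 0 <= s <= h -> 0 <= t <= h ->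
     is_derive (fun s' => w s' t) s (a s t) /\ is_derive (fun t' => w s t') t (b s t)) ->
  exists c e, 0 <= c <= h /\ 0 <= e <= h /\ a c h - a c 0 = b h e - b 0 e.
Proof.
  intros Hh Hd.
  destruct (mvt_interval (fun s => w s h - w s 0) (fun s => a s h - a s 0) h Hh)
    as [c [Hc Ec]].
  { intros s Hs. apply (is_derive_minus (fun s => w s h) (fun s => w s 0)); apply Hd; lra. }
  destruct (mvt_interval (fun t => w h t - w 0 t) (fun t => b h t - b 0 t) h Hh)
    as [e [He Ee]].
  { intros t Ht. apply (is_derive_minus (fun t => w h t) (fun t => w 0 t)); apply Hd; lra. }
  exists c, e. repeat split; try lra.
  apply (Rmult_eq_reg_r h); [|lra]. rewrite <- Ec, <- Ee. ring.
Qed.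

(* The last two hypotheses say that a and b are differentiable at the origin, with
   d_t a(0,0) = A and d_s b(0,0) = B; no continuity of a or b is needed. *)
Lemma young_mixed_partials (w a b : R -> R -> R) (A B al be : R) :
  (exists r, 0 < r /\ forall s t, Rabs s < r -> Rabs t < r ->
      is_derive (fun s' => w s' t) s (a s t) /\ is_derive (fun t' => w s t') t (b s t)) ->
  (forall eps, 0 < eps -> exists d, 0 < d /\ forall s t, Rabs s < d -> Rabs t < d ->
      Rabs (a s t - a 0 0 - al * s - A * t) <= eps * (Rabs s + Rabs t)) ->
  (forall eps, 0 < eps -> exists d, 0 < d /\ forall s t, Rabs s < d -> Rabs t < d ->
      Rabs (b s t - b 0 0 - B * s - be * t) <= eps * (Rabs s + Rabs t)) ->
  A = B.
Proof.
  intros [r [Hr Hd]] Ha Hb.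
  assert (Hsmall : forall eps, 0 < eps -> Rabs (A - B) <= 6 * eps).
  { intros eps Heps.
    destruct (Ha eps Heps) as [d1 [Hd1 Ha']].
    destruct (Hb eps Heps) as [d2 [Hd2 Hb']].
    set (h := Rmin r (Rmin d1 d2) / 2).
    assert (Hh : 0 < h /\ h < r /\ h < d1 /\ h < d2)
      by (unfold h; repeat apply Rmin_case_strong; intros; lra).
    assert (Habs : forall s, 0 <= s <= h -> Rabs s = s) by (intros; apply Rabs_pos_eq; lra).
    destruct (second_difference_mvt w a b h) as [c [e [Hc [He Ece]]]]; [lra| |].
    { intros s t Hs Ht. apply Hd; rewrite Habs; lra. }
    assert (X1 := Ha' c h). assert (X2 := Ha' c 0).
    assert (Y1 := Hb' h e). assert (Y2 := Hb' 0 e).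
    rewrite ?Habs, ?Rabs_R0 in X1, X2, Y1, Y2 by lra.
    specialize (X1 ltac:(lra) ltac:(lra)). specialize (X2 ltac:(lra) ltac:(lra)).
    specialize (Y1 ltac:(lra) ltac:(lra)). specialize (Y2 ltac:(lra) ltac:(lra)).
    (* the four error terms telescope to (A - B) h since a c h - a c 0 = b h e - b 0 e *)
    assert (K : Rabs ((A - B) * h) <= 6 * eps * h).
    { replace ((A - B) * h) with
        (- (a c h - a 0 0 - al * c - A * h) + (a c 0 - a 0 0 - al * c - A * 0)
         + (b h e - b 0 0 - B * h - be * e) - (b 0 e - b 0 0 - B * 0 - be * e)
         + ((a c h - a c 0) - (b h e - b 0 e))) by ring.
      rewrite Ece, Rminus_diag, Rplus_0_r.
      eapply Rle_trans; [apply Rabs_triang|].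
      eapply Rle_trans; [apply Rplus_le_compat_r, Rabs_triang|].
      eapply Rle_trans; [apply Rplus_le_compat_r, Rplus_le_compat_r, Rabs_triang|].
      rewrite !Rabs_Ropp. nra. }
    rewrite Rabs_mult, (Rabs_pos_eq h) in K by lra. nra. }
  destruct (Req_dec A B) as [|HAB]; [assumption|exfalso].
  assert (Hpos : 0 < Rabs (A - B)) by (apply Rabs_pos_lt; lra).
  specialize (Hsmall (Rabs (A - B) / 12) ltac:(lra)). lra.
Qed.

Section Directional.
Context {V : NormedModule R_AbsRing}.

Lemma scal_R0 (v : V) : scal 0 v = zero.
Proof. exact (scal_zero_l v). Qed.

Definition dderiv (v : V) (u : V -> R) (y : V) : R :=
  Derive (fun t => u (plus y (scal t v))) 0.

Lemma is_derive_along (u : V -> R) (y v : V) (r : R) (L : V -> R) :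
  filterdiff u (locally (plus y (scal r v))) L ->
  is_derive (fun t => u (plus y (scal t v))) r (L v).
Proof.
  intros Hu.
  assert (Hline : is_derive (fun t : R => plus y (scal t v)) r v).
  { eapply filterdiff_ext_lin.
    - apply (is_derive_plus (fun _ => y) (fun t => scal t v) r zero v).
      + apply is_derive_const.
      + rewrite <- (scal_one v) at 1. apply (is_derive_scal_l (fun t => t)), is_derive_id.
    - intros z. simpl. rewrite plus_zero_l. reflexivity. }
  eapply filterdiff_ext_lin; [exact (filterdiff_comp' _ u r _ L Hline Hu)|].
  intros z. simpl. rewrite (linear_scal L (proj1 Hu)). reflexivity.
Qed.

Lemma dderiv_filterdiff (u : V -> R) (y v : V) (L : V -> R) :
  filterdiff u (locally y) L -> dderiv v u y = L v.
Proof.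
  intros Hu. apply is_derive_unique, is_derive_along.
  rewrite scal_R0, plus_zero_r. exact Hu.
Qed.

Definition plane (x v w : V) (s t : R) : V := plus (plus x (scal s v)) (scal t w).

Lemma plane_0 (x v w : V) : plane x v w 0 0 = x.
Proof. unfold plane. rewrite !scal_R0, !plus_zero_r. reflexivity. Qed.

Lemma plane_swap (x v w : V) (s t : R) : plane x v w s t = plane x w v t s.
Proof. unfold plane. rewrite <- !plus_assoc, (plus_comm (scal s v)). reflexivity. Qed.

Lemma plane_sub (x v w : V) (s t : R) :
  minus (plane x v w s t) x = plus (scal s v) (scal t w).
Proof.
  unfold plane, minus.
  rewrite (plus_comm _ (opp x)), !plus_assoc, plus_opp_l, plus_zero_l. reflexivity.
Qed.

Definition plane_scale (v w : V) : R := norm v + norm w + 1.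

Lemma plane_scale_pos (v w : V) : 0 < plane_scale v w.
Proof.
  unfold plane_scale.
  assert (0 <= norm v) by apply norm_ge_0. assert (0 <= norm w) by apply norm_ge_0. lra.
Qed.

Lemma norm_plane_sub (x v w : V) (s t : R) :
  norm (minus (plane x v w s t) x) <= plane_scale v w * (Rabs s + Rabs t).
Proof.
  rewrite plane_sub. eapply Rle_trans; [apply (@norm_triangle R_AbsRing V)|].
  assert (Hs := norm_scal s v). assert (Ht := norm_scal t w).
  change (abs s) with (Rabs s) in Hs. change (abs t) with (Rabs t) in Ht.
  eapply Rle_trans; [apply Rplus_le_compat; [exact Hs|exact Ht]|].
  assert (0 <= norm v) by apply norm_ge_0. assert (0 <= norm w) by apply norm_ge_0.
  assert (0 <= Rabs s) by apply Rabs_pos. assert (0 <= Rabs t) by apply Rabs_pos.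
  unfold plane_scale. nra.
Qed.

Lemma plane_ball (x v w : V) (d s t : R) : 0 < d ->
  Rabs s < d / (2 * plane_scale v w) -> Rabs t < d / (2 * plane_scale v w) ->
  ball x d (plane x v w s t).
Proof.
  intros Hd Hs Ht. apply norm_compat1.
  assert (HK := plane_scale_pos v w).
  eapply Rle_lt_trans; [apply norm_plane_sub|].
  apply (Rmult_lt_reg_r (/ plane_scale v w)); [apply Rinv_0_lt_compat; lra|].
  field_simplify; [|lra|lra]. unfold Rdiv in *. rewrite Rinv_mult in Hs, Ht. lra.
Qed.

Lemma filterdiff_plane_approx (g : V -> R) (x v w : V) (L : V -> R) :
  filterdiff g (locally x) L ->
  forall eps, 0 < eps -> exists d, 0 < d /\ forall s t, Rabs s < d -> Rabs t < d ->
    Rabs (g (plane x v w s t) - g x - L v * s - L w * t) <= eps * (Rabs s + Rabs t).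
Proof.
  intros [Hlin Hg] eps Heps.
  set (K := plane_scale v w). assert (HK : 0 < K) by apply plane_scale_pos.
  destruct (Hg x (fun P HP => HP) (mkposreal (eps / K) ltac:(apply Rdiv_lt_0_compat; lra)))
    as [d Hd].
  exists (d / (2 * K)). split; [apply Rdiv_lt_0_compat; [apply cond_pos|lra]|].
  intros s t Hs Ht.
  specialize (Hd _ (plane_ball x v w d s t (cond_pos d) Hs Ht)). simpl in Hd.
  eapply Rle_trans; [|eapply Rle_trans; [exact Hd|]].
  - right. rewrite plane_sub, (linear_plus L Hlin), !(linear_scal L Hlin).
    change (Rabs (g (plane x v w s t) - g x - L v * s - L w * t) =
            Rabs (g (plane x v w s t) - g x - (s * L v + t * L w))).
    f_equal. ring.
  - replace (eps * (Rabs s + Rabs t)) with (eps / K * (K * (Rabs s + Rabs t))) by (field; lra).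
    apply Rmult_le_compat_l; [apply Rlt_le, Rdiv_lt_0_compat; lra|apply norm_plane_sub].
Qed.

Lemma dderiv_comm (u : V -> R) (x v w : V) :
  (exists r : posreal, forall y, ball x r y -> ex_filterdiff u (locally y)) ->
  ex_filterdiff (dderiv v u) (locally x) -> ex_filterdiff (dderiv w u) (locally x) ->
  dderiv w (dderiv v u) x = dderiv v (dderiv w u) x.
Proof.
  intros [r Hr] [Lv Hv] [Lw Hw].
  rewrite (dderiv_filterdiff _ _ _ _ Hv), (dderiv_filterdiff _ _ _ _ Hw).
  set (K := plane_scale v w). assert (HK : 0 < K) by apply plane_scale_pos.
  apply (young_mixed_partials (fun s t => u (plane x v w s t))
     (fun s t => dderiv v u (plane x v w s t)) (fun s t => dderiv w u (plane x v w s t))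
     (Lv w) (Lw v) (Lv v) (Lw w)).
  - exists (r / (2 * K)). split; [apply Rdiv_lt_0_compat; [apply cond_pos|lra]|].
    intros s t Hs Ht.
    destruct (Hr _ (plane_ball x v w r s t (cond_pos r) Hs Ht)) as [L HL].
    rewrite !(dderiv_filterdiff _ _ _ _ HL). split.
    + apply (is_derive_ext (fun s' => u (plane x w v t s')));
        [intros; apply f_equal, plane_swap|].
      apply is_derive_along. change (filterdiff u (locally (plane x w v t s)) L).
      rewrite <- plane_swap. exact HL.
    + apply is_derive_along. exact HL.
  - intros eps Heps. rewrite plane_0. exact (filterdiff_plane_approx _ x v w Lv Hv eps Heps).
  - intros eps Heps. rewrite plane_0.
    destruct (filterdiff_plane_approx _ x w v Lw Hw eps Heps) as [d [Hd Happrox]].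
    exists d. split; [exact Hd|]. intros s t Hs Ht.
    rewrite plane_swap, Rplus_comm, (Rmult_comm (Lw v)), (Rmult_comm (Lw w)).
    replace (_ - _ - s * _ - t * _)
      with (dderiv w u (plane x w v t s) - dderiv w u x - Lw w * t - Lw v * s) by ring.
    exact (Happrox t s Ht Hs).
Qed.
End Directional.

(* R3 with its product normed-module structure, which unification does not always infer. *)
Local Notation R3N :=
  (prod_NormedModule R_AbsRing (prod_NormedModule R_AbsRing R_NormedModule R_NormedModule)
     R_NormedModule).

Definition unit_vec (k : nat) : R3 :=
  match k with 1%nat => (1, 0, 0) | 2%nat => (0, 1, 0) | _ => (0, 0, 1) end.

Lemma shift_unit_vec (k : nat) (x : R3) (t : R) : shift k x t = plus x (scal t (unit_vec k)).
Proof.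
  destruct x as [[x1 x2] x3].
  destruct k as [|[|[|k]]]; apply injective_projections; try apply injective_projections;
  cbn; unfold plus, scal, mult; cbn; change (@mult (AbsRing.Ring R_AbsRing)) with Rmult; ring.
Qed.

Lemma shift_R0 (k : nat) (x : R3) : shift k x 0 = x.
Proof.
  destruct x as [[x1 x2] x3]. destruct k as [|[|[|k]]]; cbn; rewrite Rplus_0_r; reflexivity.
Qed.

Definition rpd (k : nat) (u : R3 -> R) (y : R3) : R := Derive (fun t => u (shift k y t)) 0.

Lemma rpd_dderiv (k : nat) : rpd k = dderiv (unit_vec k).
Proof.
  apply functional_extensionality; intros u; apply functional_extensionality; intros y.
  apply Derive_ext. intros t. rewrite shift_unit_vec. reflexivity.
Qed.

Lemma rpd_comm (u : R3 -> R) (x : R3) (j k : nat) :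
  (exists r : posreal, forall y, ball x r y -> ex_filterdiff u (locally y)) ->
  ex_filterdiff (rpd j u) (locally x) -> ex_filterdiff (rpd k u) (locally x) ->
  rpd k (rpd j u) x = rpd j (rpd k u) x.
Proof.
  rewrite !rpd_dderiv. exact (dderiv_comm (V := R3N) u x _ _).
Qed.

Lemma ex_filterdiff_Re (F : R3 -> C) (y : R3) :
  ex_filterdiff F (locally y) -> ex_filterdiff (fun z => Re (F z)) (locally y).
Proof.
  intros [l Hl]. exists (fun z => fst (l z)).
  apply (filterdiff_comp' F fst y l fst Hl), filterdiff_linear, is_linear_fst.
Qed.

Lemma ex_filterdiff_Im (F : R3 -> C) (y : R3) :
  ex_filterdiff F (locally y) -> ex_filterdiff (fun z => Im (F z)) (locally y).
Proof.
  intros [l Hl]. exists (fun z => snd (l z)).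
  apply (filterdiff_comp' F snd y l snd Hl), filterdiff_linear, is_linear_snd.
Qed.

Lemma pd_comm (F : R3 -> C) (x : R3) (j k : nat) :
  (exists r : posreal, forall y, ball x r y -> ex_filterdiff F (locally y)) ->
  ex_filterdiff (pd j F) (locally x) -> ex_filterdiff (pd k F) (locally x) ->
  pd k (pd j F) x = pd j (pd k F) x.
Proof.
  intros [r Hr] Hj Hk.
  change (pd k (pd j F) x) with
    (rpd k (rpd j (fun y => Re (F y))) x, rpd k (rpd j (fun y => Im (F y))) x).
  change (pd j (pd k F) x) with
    (rpd j (rpd k (fun y => Re (F y))) x, rpd j (rpd k (fun y => Im (F y))) x).
  f_equal; apply rpd_comm.
  - exists r. intros y Hy. exact (ex_filterdiff_Re F y (Hr y Hy)).
  - exact (ex_filterdiff_Re _ x Hj).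
  - exact (ex_filterdiff_Re _ x Hk).
  - exists r. intros y Hy. exact (ex_filterdiff_Im F y (Hr y Hy)).
  - exact (ex_filterdiff_Im _ x Hj).
  - exact (ex_filterdiff_Im _ x Hk).
Qed.

Lemma pd_comm_on (Om : R3 -> Prop) (F : R3 -> C) (x : R3) (j k : nat) :
  open Om -> twice_diff_on Om F -> Om x -> (1 <= j <= 3)%nat -> (1 <= k <= 3)%nat ->
  pd k (pd j F) x = pd j (pd k F) x.
Proof.
  intros HOm HF Hx Hj Hk. apply pd_comm.
  - destruct (HOm x Hx) as [r Hr]. exists r. intros y Hy. exact (proj1 (HF y (Hr y Hy))).
  - exact (proj2 (HF x Hx) j Hj).
  - exact (proj2 (HF x Hx) k Hk).
Qed.

Definition is_pd (k : nat) (F : R3 -> C) (x : R3) (d : C) : Prop :=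
  is_derive (fun t => Re (F (shift k x t))) 0 (Re d) /\
  is_derive (fun t => Im (F (shift k x t))) 0 (Im d).

Lemma is_pd_unique (k : nat) (F : R3 -> C) (x : R3) (d : C) : is_pd k F x d -> pd k F x = d.
Proof.
  intros [HRe HIm]. destruct d as [d1 d2].
  unfold pd. f_equal; apply is_derive_unique; assumption.
Qed.

Lemma is_derive_rpd (u : R3 -> R) (x : R3) (k : nat) :
  ex_filterdiff u (locally x) -> is_derive (fun t => u (shift k x t)) 0 (rpd k u x).
Proof.
  intros [L HL].
  rewrite rpd_dderiv, (dderiv_filterdiff (V := R3N) _ _ _ _ HL).
  apply (is_derive_ext (fun t => u (plus x (scal t (unit_vec k))))).
  { intros t. rewrite shift_unit_vec. reflexivity. }
  apply (is_derive_along (V := R3N)). rewrite (scal_R0 (V := R3N)), plus_zero_r. exact HL.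
Qed.

Lemma is_pd_pd (k : nat) (F : R3 -> C) (x : R3) :
  ex_filterdiff F (locally x) -> is_pd k F x (pd k F x).
Proof.
  intros HF. split.
  - exact (is_derive_rpd _ x k (ex_filterdiff_Re F x HF)).
  - exact (is_derive_rpd _ x k (ex_filterdiff_Im F x HF)).
Qed.

Lemma is_pd_const (k : nat) (c : C) (x : R3) : is_pd k (fun _ => c) x C0.
Proof. split; apply (is_derive_const (V := R_NormedModule)). Qed.

Lemma is_pd_plus (k : nat) (F G : R3 -> C) (x : R3) (a b : C) :
  is_pd k F x a -> is_pd k G x b -> is_pd k (fun y => Cplus (F y) (G y)) x (Cplus a b).
Proof.
  intros [F1 F2] [G1 G2].
  split; [exact (is_derive_plus _ _ _ _ _ F1 G1)|exact (is_derive_plus _ _ _ _ _ F2 G2)].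
Qed.

Lemma is_pd_opp (k : nat) (F : R3 -> C) (x : R3) (a : C) :
  is_pd k F x a -> is_pd k (fun y => Copp (F y)) x (Copp a).
Proof. intros [F1 F2]. split; [exact (is_derive_opp _ _ _ F1)|exact (is_derive_opp _ _ _ F2)]. Qed.

Lemma is_pd_minus (k : nat) (F G : R3 -> C) (x : R3) (a b : C) :
  is_pd k F x a -> is_pd k G x b -> is_pd k (fun y => Cminus (F y) (G y)) x (Cminus a b).
Proof. intros HF HG. apply is_pd_plus; [exact HF|apply is_pd_opp; exact HG]. Qed.

Lemma is_pd_mult (k : nat) (F G : R3 -> C) (x : R3) (a b : C) :
  is_pd k F x a -> is_pd k G x b ->
  is_pd k (fun y => Cmult (F y) (G y)) x (Cplus (Cmult a (G x)) (Cmult (F x) b)).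
Proof.
  intros [F1 F2] [G1 G2].
  assert (Hc : forall r s : R_AbsRing, mult r s = mult s r) by (intros; apply Rmult_comm).
  assert (HRe := is_derive_minus _ _ _ _ _
    (is_derive_mult _ _ _ _ _ F1 G1 Hc) (is_derive_mult _ _ _ _ _ F2 G2 Hc)).
  assert (HIm := is_derive_plus _ _ _ _ _
    (is_derive_mult _ _ _ _ _ F1 G2 Hc) (is_derive_mult _ _ _ _ _ F2 G1 Hc)).
  split; [refine (eq_ind _ (is_derive _ 0) HRe _ _)|refine (eq_ind _ (is_derive _ 0) HIm _ _)];
    cbn; rewrite shift_R0; unfold plus, minus, opp, mult, Re, Im; cbn; ring.
Qed.

Lemma is_pd_inv (k : nat) (F : R3 -> C) (x : R3) (a : C) :
  is_pd k F x a -> F x <> C0 ->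
  is_pd k (fun y => Cinv (F y)) x (Copp (Cmult a (Cmult (Cinv (F x)) (Cinv (F x))))).
Proof.
  intros [F1 F2] Hnz.
  assert (Hn : Re (F x) ^ 2 + Im (F x) ^ 2 <> 0).
  { intros E. apply Hnz. destruct (F x) as [p q]. cbn in E. unfold C0, RtoC. f_equal; nra. }
  assert (Hsq := is_derive_plus _ _ _ _ _ (is_derive_pow _ 2 _ _ F1) (is_derive_pow _ 2 _ _ F2)).
  assert (Hsq0 : (fun t => Re (F (shift k x t)) ^ 2 + Im (F (shift k x t)) ^ 2) 0 <> 0)
    by (cbn; rewrite shift_R0; exact Hn).
  split;
    [refine (eq_ind _ (is_derive _ 0) (is_derive_div _ _ _ _ _ F1 Hsq Hsq0) _ _)
    |refine (eq_ind _ (is_derive _ 0)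
               (is_derive_div _ _ _ _ _ (is_derive_opp _ _ _ F2) Hsq Hsq0) _ _)];
    cbn; rewrite shift_R0; unfold Re, Im, plus, mult, opp in *; cbn;
    field; contradict Hn; lra.
Qed.

Lemma pd_const (k : nat) (c : C) (x : R3) : pd k (fun _ => c) x = C0.
Proof. apply is_pd_unique, is_pd_const. Qed.

Ltac bq_components :=
  apply injective_projections; [|apply injective_projections; [apply injective_projections|]];
  cbn [fst snd].

Lemma Dop_scalar (s : R3 -> C) (x : R3) : Dop (fun y => qscal (s y)) x = qvec (grad s x).
Proof.
  cbv beta iota zeta delta [Dop pdq qscal qvec grad qmul qadd i1 i2 i3 vzero vadd vscal vdot vcross
    fst snd].
  rewrite !pd_const. unfold C0, Defs.C1. change (fun y => s y) with s. bq_components; ring.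
Qed.

Lemma Dop_vector (g1 g2 g3 : R3 -> C) (x : R3) :
  Dop (fun y => qvec (g1 y, g2 y, g3 y)) x =
  (Copp (Cplus (Cplus (pd 1 g1 x) (pd 2 g2 x)) (pd 3 g3 x)),
   (Cminus (pd 2 g3 x) (pd 3 g2 x), Cminus (pd 3 g1 x) (pd 1 g3 x),
    Cminus (pd 1 g2 x) (pd 2 g1 x))).
Proof.
  cbv beta iota zeta delta [Dop pdq qvec qmul qadd i1 i2 i3 vzero vadd vscal vdot vcross fst snd].
  rewrite !pd_const. unfold C0, Defs.C1.
  change (fun y => g1 y) with g1; change (fun y => g2 y) with g2; change (fun y => g3 y) with g3.
  bq_components; ring.
Qed.

Definition covariant_pd (phi psi : R3 -> C) (j : nat) (y : R3) : C :=
  Cminus (pd j psi y) (Cmult (psi y) (Cmult (Cinv (phi y)) (pd j phi y))).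

Lemma pd_covariant_pd (Om : R3 -> Prop) (phi psi : R3 -> C) (x : R3) (j k : nat) :
  twice_diff_on Om phi -> twice_diff_on Om psi -> Om x -> phi x <> C0 -> (1 <= j <= 3)%nat ->
  pd k (covariant_pd phi psi j) x =
  Cminus (pd k (pd j psi) x)
    (Cplus (Cmult (pd k psi x) (Cmult (Cinv (phi x)) (pd j phi x)))
       (Cmult (psi x)
          (Cplus (Cmult (Copp (Cmult (pd k phi x) (Cmult (Cinv (phi x)) (Cinv (phi x)))))
                    (pd j phi x))
                 (Cmult (Cinv (phi x)) (pd k (pd j phi) x))))).
Proof.
  intros Hphi Hpsi Hx Hnz Hj.
  destruct (Hphi x Hx) as [Hphi1 Hphi2]. destruct (Hpsi x Hx) as [Hpsi1 Hpsi2].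
  apply is_pd_unique, is_pd_minus; [apply is_pd_pd, Hpsi2, Hj|].
  apply is_pd_mult; [apply is_pd_pd, Hpsi1|].
  apply is_pd_mult; [apply is_pd_inv; [apply is_pd_pd, Hphi1|exact Hnz]|].
  apply is_pd_pd, Hphi2, Hj.
Qed.

Theorem proposition1 (Om : R3 -> Prop) (phi psi : R3 -> C) :
  domain3 Om ->
  twice_diff_on Om phi ->
  (forall x, Om x -> phi x <> C0) ->
  twice_diff_on Om psi ->
  (* psi solves -Lap psi + v psi = 0 with v = Lap phi / phi *)
  (forall x, Om x ->
     Cplus (Copp (laplacian psi x)) (Cmult (Cdiv (laplacian phi x) (phi x)) (psi x)) = C0) ->
  let alpha : R3 -> CV := fun x => vscal (Cinv (phi x)) (grad phi x) in
  let f : R3 -> BQ := fun x =>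
    qsub (Dop (fun y => qscal (psi y)) x) (qmul (qvec (alpha x)) (qscal (psi x))) in
  forall x, Om x -> qadd (Dop f x) (Mr (qvec (alpha x)) (f x)) = qzero.
Proof.
  intros [HOm _] Hphi Hnz Hpsi Hschr alpha f x Hx.
  assert (Ef : f = fun y =>
    qvec (covariant_pd phi psi 1 y, covariant_pd phi psi 2 y, covariant_pd phi psi 3 y)).
  { apply functional_extensionality; intros y.
    unfold f. rewrite Dop_scalar.
    cbv beta iota zeta delta [alpha covariant_pd qsub qadd qopp qmul qscal qvec grad
      vzero vadd vscal vdot vcross fst snd].
    unfold C0. bq_components; ring. }
  clearbody f. subst f. specialize (Hnz x Hx).
  rewrite Dop_vector, !(pd_covariant_pd Om phi psi x) by (assumption || lia).
  rewrite (pd_comm_on Om psi x 1 2), (pd_comm_on Om psi x 1 3), (pd_comm_on Om psi x 2 3),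
    (pd_comm_on Om phi x 1 2), (pd_comm_on Om phi x 1 3), (pd_comm_on Om phi x 2 3)
    by (assumption || lia).
  cbv beta iota zeta delta [alpha covariant_pd Mr qvec qzero qadd qmul vzero vadd vscal vdot vcross
    grad fst snd].
  bq_components; [etransitivity; [|exact (Hschr x Hx)]; unfold laplacian|..];
    unfold C0; field; exact Hnz.
Qed.
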